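(* Let $\beta>0$, $N$ constant, $t>0$, and $(x,y)=r(\cos\phi,\sin\phi)$ with $r>0$. Set $\alpha=\beta r t$ and $\gamma=\cos(\phi/2)$. Define $$\psi_G=-\frac{N}{2\pi}\int_0^\infty\frac{dk}{k}\,J_0(A),\qquad A=\left[\left(kx+\frac{\beta t}{k}\right)^2+k^2y^2\right]^{1/2},$$ which is the Green's function of Proposition 3.1 with $k_d=0$. Then $$\psi_G=-\frac{N}{\pi}\int_0^\infty \frac{dz}{\sqrt{1+z^2}}\,J_0\!\left(2\sqrt{\alpha}\,(z^2+\gamma^2)^{1/2}\right).$$
   Context: $J_0$ is the Bessel function of the first kind of order zero. *)

From Stdlib Require Import Reals Lra Arith ClassicalEpsilon.
Open Scope R_scope.

(* The series converges for every x; we pick its sum via classical choice. *)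
Definition J0_term (x : R) (m : nat) : R :=
  (-1) ^ m / (INR (Factorial.fact m)) ^ 2 * (x / 2) ^ (2 * m).

Definition J0 (x : R) : R :=
  epsilon (inhabits 0) (fun l => infinite_sum (J0_term x) l).

Definition improper_int_0_inf (f : R -> R) (L : R) : Prop :=
  forall eps, 0 < eps ->
  exists delta M, 0 < delta /\
    forall a b, 0 < a -> a < delta -> M < b ->
      exists pr : Riemann_integrable f a b, Rabs (RiemannInt pr - L) < eps.

(* Put [c = sqrt (r / (beta t))] and [z = (c k - 1 / (c k)) / 2], i.e. [k = e^u / c] and
   [z = sinh u].  Since [cos phi = 2 gamma^2 - 1], the argument of the Bessel function
   becomes [A = 2 sqrt alpha sqrt (z^2 + gamma^2)], while [1 + z^2 = cosh^2 u] turns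
   [dk / k] into [dz / sqrt (1 + z^2)].  As [k] runs over (0, oo), [z] runs over the whole
   line, and the [z]-integrand is even, so the [k]-integral is twice the [z]-integral.
   The latter converges because an integration by parts based on [(w J1 w)' = w J0 w]
   leaves an [O (1 / z^2)] integrand; this uses [|J1| <= 1] on [0, oo), which follows
   from the energy [J0^2 + J1^2] having the nonpositive derivative [- 2 J1^2 / x]. *)

From Stdlib Require Import Reals Lra Lia Factorial ClassicalEpsilon.
From Coquelicot Require Import Coquelicot.
Open Scope R_scope.

Lemma is_derive_eq (f : R -> R) x l l' : is_derive f x l -> l = l' -> is_derive f x l'.
Proof. now intros Hf <-. Qed.

Lemma ball_R x eps y : ball x eps y <-> Rabs (y - x) < eps.
Proof. reflexivity. Qed.

Lemma Rinv_mult_le_l x y : 0 < x -> 1 <= y -> / (x * y) <= / x.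
Proof.
  intros Hx Hy. apply Rinv_le_contravar; [exact Hx|].
  rewrite <- (Rmult_1_r x) at 1. apply Rmult_le_compat_l; lra.
Qed.

Lemma sqrt_1_plus_sq_ge_1 z : 1 <= sqrt (1 + z ^ 2).
Proof.
  rewrite <- sqrt_1 at 1. apply sqrt_le_1_alt. pose proof (pow2_ge_0 z). lra.
Qed.

Lemma sqrt_1_plus_sq_sqr z : sqrt (1 + z ^ 2) ^ 2 = 1 + z ^ 2.
Proof. apply pow2_sqrt. pose proof (pow2_ge_0 z). lra. Qed.

Lemma improper_int_of_primitive (f P : R -> R) (l0 l1 : R) :
  (forall a b, 0 < a -> a <= b -> is_RInt f a b (P b - P a)) ->
  filterlim P (at_right 0) (locally l0) ->
  filterlim P (Rbar_locally p_infty) (locally l1) ->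
  improper_int_0_inf f (l1 - l0).
Proof.
  intros Hint H0 Hinf eps Heps.
  destruct (H0 _ (locally_ball l0 (mkposreal (eps / 2) ltac:(lra)))) as [delta Hdelta].
  destruct (Hinf _ (locally_ball l1 (mkposreal (eps / 2) ltac:(lra)))) as [M HM].
  exists delta, (Rmax M delta). split; [apply cond_pos|].
  intros a b Ha Hadelta Hb.
  assert (Hab : a <= b) by (pose proof (Rmax_r M delta); lra).
  exists (ex_RInt_Reals_0 _ _ _ (ex_intro _ _ (Hint a b Ha Hab))).
  rewrite <- RInt_Reals, (is_RInt_unique _ _ _ _ (Hint a b Ha Hab)).
  assert (Hb' : Rabs (P b - l1) < eps / 2).
  { apply ball_R, HM. pose proof (Rmax_l M delta); lra. }
  assert (Ha' : Rabs (P a - l0) < eps / 2).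
  { apply ball_R, Hdelta; [|exact Ha]. apply ball_R. rewrite Rminus_0_r, Rabs_pos_eq; lra. }
  replace (P b - P a - (l1 - l0)) with ((P b - l1) - (P a - l0)) by ring.
  eapply Rle_lt_trans; [apply Rabs_triang|]. rewrite Rabs_Ropp. lra.
Qed.

Lemma ex_lim_p_infty_of_tail_bound (F : R -> R) C :
  (forall b1 b2, 1 <= b1 -> b1 <= b2 -> Rabs (F b2 - F b1) <= C / b1) ->
  exists L, filterlim F (Rbar_locally p_infty) (locally L).
Proof.
  intro Htail.
  apply (@filterlim_locally_cauchy _ R_CompleteSpace _ (Rbar_locally_filter p_infty)).
  intro eps. exists (fun b => Rmax 1 (C / eps) < b). split; [now exists (Rmax 1 (C / eps))|].
  assert (Hbound : forall b1 b2, Rmax 1 (C / eps) < b1 -> b1 <= b2 -> Rabs (F b2 - F b1) < eps).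
  { intros b1 b2 Hb1 Hb12.
    pose proof (Rmax_l 1 (C / eps)). pose proof (Rmax_r 1 (C / eps)).
    pose proof (cond_pos eps).
    eapply Rle_lt_trans; [apply Htail; lra|].
    assert (C < b1 * eps) by (apply Rlt_div_l; lra).
    apply Rlt_div_l; lra. }
  intros u v Hu Hv. apply ball_R.
  destruct (Rle_lt_dec u v) as [Huv | Hvu].
  - now apply Hbound.
  - rewrite Rabs_minus_sym. apply Hbound; lra.
Qed.

Lemma Rabs_RInt_le_inv_sq (f : R -> R) C a b :
  0 < a -> a <= b -> ex_RInt f a b ->
  (forall z, a <= z <= b -> Rabs (f z) <= C / z ^ 2) ->
  Rabs (RInt f a b) <= C / a.
Proof.
  intros Ha Hab Hf Hbound.
  assert (HC : 0 <= C).
  { pose proof (Hbound a ltac:(lra)). pose proof (Rabs_pos (f a)).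
    assert (0 < a ^ 2) by nra.
    apply (Rmult_le_reg_r (/ a ^ 2)); [now apply Rinv_0_lt_compat|]. lra. }
  assert (Hprim : is_RInt (fun z => C / z ^ 2) a b (C / a - C / b)).
  { replace (C / a - C / b) with (minus ((fun z => - (C / z)) b) ((fun z => - (C / z)) a)).
    2: { unfold minus, plus, opp; simpl. ring. }
    apply (is_RInt_derive (fun z => - (C / z))); intros z Hz;
      rewrite Rmin_left, Rmax_right in Hz by lra.
    - auto_derive; [lra | field; lra].
    - apply (ex_derive_continuous (fun z => C / z ^ 2)). auto_derive. nra. }
  eapply Rle_trans; [apply abs_RInt_le; assumption|].
  eapply Rle_trans.
  { apply RInt_le; [exact Hab | apply ex_RInt_norm, Hf | eexists; exact Hprim |].
    intros z Hz. apply Hbound; lra. }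
  rewrite (is_RInt_unique _ _ _ _ Hprim).
  assert (0 <= C / b) by (apply Rdiv_le_0_compat; lra). lra.
Qed.

Lemma INR_fact_pos n : 0 < INR (fact n).
Proof. apply lt_0_INR, lt_O_fact. Qed.

Lemma INR_fact_S n : INR (fact (S n)) = INR (S n) * INR (fact n).
Proof. now rewrite fact_simpl, mult_INR. Qed.

Lemma is_lim_seq_inv_S : is_lim_seq (fun n => / INR (S n)) 0.
Proof.
  replace (Finite 0) with (Rbar_inv p_infty) by reflexivity.
  apply (is_lim_seq_inv (fun n => INR (S n))); [|discriminate].
  apply (is_lim_seq_incr_1 INR), is_lim_seq_INR.
Qed.

Lemma CV_radius_infinite_of_ratio_le (a : nat -> R) :
  (forall n, a n <> 0) -> (forall n, Rabs (a (S n) / a n) <= / INR (S n)) ->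
  CV_radius a = p_infty.
Proof.
  intros Ha Hratio. apply CV_radius_infinite_DAlembert; [exact Ha|].
  apply is_lim_seq_le_le with (u := fun _ => 0) (w := fun n => / INR (S n)).
  - intro n. split; [apply Rabs_pos | apply Hratio].
  - apply is_lim_seq_const.
  - apply is_lim_seq_inv_S.
Qed.

Definition j0_coef (n : nat) : R := (-1) ^ n / INR (fact n) ^ 2.
Definition j1_coef (n : nat) : R := (-1) ^ n / (INR (fact n) * INR (fact (S n))).

Lemma CV_radius_j0_coef : CV_radius j0_coef = p_infty.
Proof.
  apply CV_radius_infinite_of_ratio_le; intro n; unfold j0_coef;
    pose proof (INR_fact_pos n); pose proof (pow_nonzero (-1) n ltac:(lra)).
  - apply Rmult_integral_contrapositive; split; [auto|].
    apply Rinv_neq_0_compat, pow_nonzero; lra.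
  - pose proof (lt_0_INR (S n) ltac:(lia)).
    assert (Hratio : (-1) ^ S n / INR (fact (S n)) ^ 2 / ((-1) ^ n / INR (fact n) ^ 2)
                     = - / (INR (S n) * INR (S n))).
    { rewrite INR_fact_S. change ((-1) ^ S n) with (-1 * (-1) ^ n). field. lra. }
    rewrite Hratio, Rabs_Ropp, Rabs_pos_eq
      by (apply Rlt_le, Rinv_0_lt_compat; nra).
    apply Rinv_mult_le_l; [lra|]. apply (le_INR 1); lia.
Qed.

Lemma CV_radius_j1_coef : CV_radius j1_coef = p_infty.
Proof.
  apply CV_radius_infinite_of_ratio_le; intro n; unfold j1_coef;
    pose proof (INR_fact_pos n); pose proof (INR_fact_pos (S n));
    pose proof (pow_nonzero (-1) n ltac:(lra)).
  - apply Rmult_integral_contrapositive; split; [auto|].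
    apply Rinv_neq_0_compat; nra.
  - pose proof (lt_0_INR (S n) ltac:(lia)). pose proof (lt_0_INR (S (S n)) ltac:(lia)).
    assert (Hratio : (-1) ^ S n / (INR (fact (S n)) * INR (fact (S (S n))))
                     / ((-1) ^ n / (INR (fact n) * INR (fact (S n))))
                     = - / (INR (S n) * INR (S (S n)))).
    { rewrite (INR_fact_S (S n)), (INR_fact_S n). change ((-1) ^ S n) with (-1 * (-1) ^ n).
      field. lra. }
    rewrite Hratio, Rabs_Ropp, Rabs_pos_eq
      by (apply Rlt_le, Rinv_0_lt_compat; nra).
    apply Rinv_mult_le_l; [lra|]. apply (le_INR 1); lia.
Qed.

Definition j0_series (w : R) : R := PSeries j0_coef w.
Definition j1_series (w : R) : R := PSeries j1_coef w.

Lemma Rbar_lt_CV_radius_infinite (a : nat -> R) w :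
  CV_radius a = p_infty -> Rbar_lt (Rabs w) (CV_radius a).
Proof. intro Ha. now rewrite Ha. Qed.

Lemma is_derive_j0_series w : is_derive j0_series w (- j1_series w).
Proof.
  eapply is_derive_eq.
  { apply is_derive_PSeries, Rbar_lt_CV_radius_infinite, CV_radius_j0_coef. }
  unfold j1_series. rewrite <- PSeries_opp. apply PSeries_ext. intro n.
  unfold PS_derive, PS_opp, j0_coef, j1_coef. change (opp ?x) with (- x).
  rewrite !(INR_fact_S n). change ((-1) ^ S n) with (-1 * (-1) ^ n).
  pose proof (INR_fact_pos n). pose proof (lt_0_INR (S n) ltac:(lia)).
  field. lra.
Qed.

Lemma is_derive_mult_j1_series w :
  is_derive (fun w => w * j1_series w) w (j0_series w).
Proof.
  apply is_derive_ext with (PSeries (PS_incr_1 j1_coef)).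
  { intro v. apply PSeries_incr_1. }
  eapply is_derive_eq.
  { apply is_derive_PSeries. rewrite CV_radius_incr_1.
    apply Rbar_lt_CV_radius_infinite, CV_radius_j1_coef. }
  apply PSeries_ext. intro n.
  unfold PS_derive, PS_incr_1, j0_coef, j1_coef. rewrite (INR_fact_S n).
  pose proof (INR_fact_pos n). pose proof (lt_0_INR (S n) ltac:(lia)).
  field. lra.
Qed.

Lemma ex_derive_j1_series w : ex_derive j1_series w.
Proof.
  eexists. apply is_derive_PSeries, Rbar_lt_CV_radius_infinite, CV_radius_j1_coef.
Qed.

Lemma j1_series_plus_derive w : j1_series w + w * Derive j1_series w = j0_series w.
Proof.
  rewrite <- (is_derive_unique _ _ _ (is_derive_mult_j1_series w)).
  symmetry. apply is_derive_unique. eapply is_derive_eq.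
  { apply (is_derive_mult (fun w => w) j1_series).
    - apply is_derive_id.
    - apply Derive_correct, ex_derive_j1_series.
    - intros; apply Rmult_comm. }
  unfold plus, scal, mult, one; simpl. ring.
Qed.

Lemma J0_eq_series x : J0 x = j0_series (x ^ 2 / 4).
Proof.
  assert (Hsum : infinite_sum (J0_term x) (j0_series (x ^ 2 / 4))).
  { apply is_series_Reals.
    assert (Hps : is_pseries j0_coef (x ^ 2 / 4) (j0_series (x ^ 2 / 4))).
    { apply PSeries_correct, CV_radius_inside.
      now apply Rbar_lt_CV_radius_infinite, CV_radius_j0_coef. }
    apply is_pseries_R in Hps. eapply is_series_ext; [|exact Hps]. intro n.
    unfold J0_term, j0_coef. rewrite pow_mult. f_equal. f_equal. field. }
  unfold J0. apply (uniqueness_sum (J0_term x)); [|exact Hsum].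
  apply (epsilon_spec (inhabits 0) (fun l => infinite_sum (J0_term x) l)).
  now exists (j0_series (x ^ 2 / 4)).
Qed.

Definition J1 (x : R) : R := x / 2 * j1_series (x ^ 2 / 4).

Lemma is_derive_quarter_sq x : is_derive (fun x => x ^ 2 / 4) x (x / 2).
Proof. auto_derive; [exact I | field]. Qed.

Lemma is_derive_J0 x : is_derive J0 x (- J1 x).
Proof.
  apply is_derive_ext with (fun x => j0_series (x ^ 2 / 4)).
  { intro; symmetry; apply J0_eq_series. }
  eapply is_derive_eq.
  { apply (is_derive_comp j0_series (fun x => x ^ 2 / 4)).
    - apply is_derive_j0_series.
    - apply is_derive_quarter_sq. }
  unfold J1, scal; simpl; unfold mult; simpl. ring.
Qed.

Lemma is_derive_J1 x : is_derive J1 x (J0 x - j1_series (x ^ 2 / 4) / 2).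
Proof.
  eapply is_derive_eq.
  { apply (is_derive_mult (fun x => x / 2) (fun x => j1_series (x ^ 2 / 4))).
    - auto_derive; reflexivity.
    - apply (is_derive_comp j1_series (fun x => x ^ 2 / 4)).
      + apply Derive_correct, ex_derive_j1_series.
      + apply is_derive_quarter_sq.
    - intros; apply Rmult_comm. }
  rewrite J0_eq_series, <- (j1_series_plus_derive (x ^ 2 / 4)).
  unfold plus, scal; simpl; unfold mult; simpl. field.
Qed.

Lemma is_derive_mult_J1 x : is_derive (fun x => x * J1 x) x (x * J0 x).
Proof.
  eapply is_derive_eq.
  { apply (is_derive_mult (fun x => x) J1).
    - apply is_derive_id.
    - apply is_derive_J1.
    - intros; apply Rmult_comm. }
  unfold J1, plus, mult, one; simpl. field.
Qed.

Lemma J0_sq_plus_J1_sq_le x : 0 <= x -> J0 x ^ 2 + J1 x ^ 2 <= 1.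
Proof.
  intro Hx.
  set (E := fun x => J0 x ^ 2 + J1 x ^ 2).
  assert (HE : forall x, is_derive E x (- (x / 2) * j1_series (x ^ 2 / 4) ^ 2)).
  { intro y. eapply is_derive_eq.
    { apply (@is_derive_plus R_AbsRing).
      - apply (is_derive_pow J0), is_derive_J0.
      - apply (is_derive_pow J1), is_derive_J1. }
    unfold J1, plus; simpl. field. }
  assert (HE0 : E 0 = 1).
  { unfold E, J1. rewrite J0_eq_series. unfold j0_series.
    replace (0 ^ 2 / 4) with 0 by field. rewrite PSeries_0.
    unfold j0_coef. simpl. field. }
  destruct (MVT_gen E 0 x _ (fun y _ => HE y)) as [c [Hc Hmvt]].
  { intros y _. apply continuity_pt_filterlim, (ex_derive_continuous E).
    eexists; apply HE. }
  rewrite Rmin_left, Rmax_right in Hc by lra.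
  assert (0 <= c / 2 * j1_series (c ^ 2 / 4) ^ 2 * x).
  { apply Rmult_le_pos; [apply Rmult_le_pos|]; [lra | apply pow2_ge_0 | lra]. }
  fold (E x). nra.
Qed.

Lemma Rabs_J1_le x : 0 <= x -> Rabs (J1 x) <= 1.
Proof.
  intro Hx. pose proof (J0_sq_plus_J1_sq_le x Hx). pose proof (pow2_ge_0 (J0 x)).
  apply Rabs_le. nra.
Qed.

Lemma continuous_J0 x : continuous J0 x.
Proof. apply (ex_derive_continuous J0). eexists; apply is_derive_J0. Qed.

Definition kernel (K gam z : R) : R := / sqrt (1 + z ^ 2) * J0 (K * sqrt (z ^ 2 + gam ^ 2)).

Lemma continuous_kernel K gam z : continuous (kernel K gam) z.
Proof.
  pose proof (sqrt_1_plus_sq_ge_1 z).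
  apply (continuous_mult (fun z => / sqrt (1 + z ^ 2)) (fun z => J0 (K * sqrt (z ^ 2 + gam ^ 2)))).
  - apply (ex_derive_continuous (fun z => / sqrt (1 + z ^ 2))).
    pose proof (pow2_ge_0 z). auto_derive. simpl in *. split; lra.
  - apply (continuous_comp (fun z => K * sqrt (z ^ 2 + gam ^ 2)) J0); [|apply continuous_J0].
    apply (continuous_mult (fun _ => K) (fun z => sqrt (z ^ 2 + gam ^ 2)));
      [apply continuous_const|].
    apply continuous_sqrt_comp, (ex_derive_continuous (fun z => z ^ 2 + gam ^ 2)).
    auto_derive. exact I.
Qed.

Lemma kernel_opp K gam z : kernel K gam (- z) = kernel K gam z.
Proof. unfold kernel. now replace ((- z) ^ 2) with (z ^ 2) by ring. Qed.

Lemma ex_RInt_kernel K gam a b : ex_RInt (kernel K gam) a b.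
Proof.
  apply (ex_RInt_continuous (V := R_CompleteNormedModule)). intros; apply continuous_kernel.
Qed.

Definition kernel_prim (K gam s : R) : R := RInt (kernel K gam) 0 s.

Lemma is_RInt_kernel K gam a b :
  is_RInt (kernel K gam) a b (kernel_prim K gam b - kernel_prim K gam a).
Proof.
  replace (kernel_prim K gam b - kernel_prim K gam a) with (RInt (kernel K gam) a b).
  { apply (RInt_correct (V := R_CompleteNormedModule)), ex_RInt_kernel. }
  pose proof (RInt_Chasles (kernel K gam) 0 a b (ex_RInt_kernel _ _ _ _) (ex_RInt_kernel _ _ _ _))
    as Hchasles.
  unfold kernel_prim, plus in *; simpl in *. lra.
Qed.

Lemma is_derive_kernel_prim K gam s : is_derive (kernel_prim K gam) s (kernel K gam s).
Proof.
  apply (is_derive_RInt (V := R_NormedModule)) with 0; [|apply continuous_kernel].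
  apply filter_forall. intro b.
  apply (RInt_correct (V := R_CompleteNormedModule)), ex_RInt_kernel.
Qed.

Lemma kernel_prim_opp K gam s : kernel_prim K gam (- s) = - kernel_prim K gam s.
Proof.
  assert (H : is_RInt (fun z => opp (kernel K gam (- z))) 0 s (kernel_prim K gam (- s))).
  { apply (is_RInt_comp_opp (V := R_NormedModule)). rewrite Ropp_0.
    apply (RInt_correct (V := R_CompleteNormedModule)), ex_RInt_kernel. }
  apply (is_RInt_opp (V := R_NormedModule)) in H.
  eapply (is_RInt_ext (V := R_NormedModule)) in H;
    [|intros z _; unfold opp; simpl; rewrite kernel_opp; apply Ropp_involutive].
  apply (is_RInt_unique (V := R_CompleteNormedModule)) in H.
  unfold kernel_prim at 2. rewrite H. unfold opp; simpl. ring.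
Qed.

Lemma filterlim_kernel_prim_at_right_0 K gam :
  filterlim (kernel_prim K gam) (at_right 0) (locally 0).
Proof.
  replace 0 with (kernel_prim K gam 0) at 2 by (unfold kernel_prim; now rewrite RInt_point).
  eapply filterlim_filter_le_1; [apply filter_le_within|].
  apply (ex_derive_continuous (kernel_prim K gam)). eexists; apply is_derive_kernel_prim.
Qed.

Lemma improper_int_kernel K gam L :
  filterlim (kernel_prim K gam) (Rbar_locally p_infty) (locally L) ->
  improper_int_0_inf (kernel K gam) L.
Proof.
  intro HL. replace L with (L - 0) by ring.
  apply improper_int_of_primitive with (kernel_prim K gam);
    [|apply filterlim_kernel_prim_at_right_0 | exact HL].
  intros; apply is_RInt_kernel.
Qed.

Lemma filterlim_kernel_prim_m_infty K gam L :
  filterlim (kernel_prim K gam) (Rbar_locally p_infty) (locally L) ->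
  filterlim (kernel_prim K gam) (Rbar_locally m_infty) (locally (- L)).
Proof.
  intro HL.
  apply filterlim_ext with (fun s => - kernel_prim K gam (- s)).
  { intro s. rewrite kernel_prim_opp. ring. }
  apply filterlim_comp with (locally L); [|apply (filterlim_opp L)].
  apply filterlim_comp with (Rbar_locally p_infty);
    [apply (filterlim_Rbar_opp m_infty) | exact HL].
Qed.

Section KernelTail.

Variables K gam : R.
Hypotheses (HK : 0 < K) (Hgam : gam ^ 2 <= 1).

Let arg z := K * sqrt (z ^ 2 + gam ^ 2).
Let weight z := / (K ^ 2 * z * sqrt (1 + z ^ 2)).
Let weight' z := - (2 * z ^ 2 + 1) / (K ^ 2 * z ^ 2 * sqrt (1 + z ^ 2) ^ 3).
Let arg_J1 z := arg z * J1 (arg z).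

Lemma is_derive_weight z : 0 < z -> is_derive weight z (weight' z).
Proof.
  intro Hz. pose proof (sqrt_1_plus_sq_ge_1 z) as Hs1. pose proof (sqrt_1_plus_sq_sqr z) as Hs2.
  unfold weight, weight'. auto_derive; replace (z * (z * 1)) with (z ^ 2) by ring;
    set (s := sqrt (1 + z ^ 2)) in *.
  - split; [nra|]. split; [|exact I].
    apply Rgt_not_eq. repeat apply Rmult_lt_0_compat; lra.
  - replace (2 * z ^ 2 + 1) with (s ^ 2 + z ^ 2) by lra.
    field. repeat split; apply Rgt_not_eq; lra.
Qed.

Lemma is_derive_arg_J1 z : 0 < z -> is_derive arg_J1 z (K ^ 2 * z * J0 (arg z)).
Proof.
  intro Hz.
  assert (Hpos : 0 < z ^ 2 + gam ^ 2) by (pose proof (pow2_ge_0 gam); nra).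
  pose proof (sqrt_lt_R0 _ Hpos).
  eapply is_derive_eq.
  { apply (is_derive_comp (fun w => w * J1 w) arg); [apply is_derive_mult_J1|].
    unfold arg. auto_derive; [simpl in *; lra | reflexivity]. }
  unfold arg, scal; simpl; unfold mult; simpl.
  replace (gam * (gam * 1)) with (gam ^ 2) by ring.
  replace (z * (z * 1)) with (z ^ 2) by ring. field. lra.
Qed.

Lemma Rabs_arg_J1_le z : Rabs (arg_J1 z) <= K * sqrt (1 + z ^ 2).
Proof.
  assert (Harg : 0 <= arg z) by (apply Rmult_le_pos; [lra | apply sqrt_pos]).
  assert (Harg_le : arg z <= K * sqrt (1 + z ^ 2)).
  { apply Rmult_le_compat_l; [lra|]. apply sqrt_le_1_alt. lra. }
  unfold arg_J1. rewrite Rabs_mult, (Rabs_pos_eq (arg z)) by exact Harg.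
  pose proof (Rabs_J1_le _ Harg). pose proof (Rabs_pos (J1 (arg z))). nra.
Qed.

Lemma kernel_eq_mul_weight z : 0 < z -> kernel K gam z = K ^ 2 * z * J0 (arg z) * weight z.
Proof.
  intro Hz. pose proof (sqrt_1_plus_sq_ge_1 z).
  unfold kernel, weight, arg. field. repeat split; apply Rgt_not_eq; lra.
Qed.

Lemma Rabs_arg_J1_mul_weight_le z : 0 < z -> Rabs (arg_J1 z * weight z) <= / (K * z).
Proof.
  intro Hz. pose proof (sqrt_1_plus_sq_ge_1 z).
  assert (Hw : 0 < weight z) by (apply Rinv_0_lt_compat; repeat apply Rmult_lt_0_compat; nra).
  rewrite Rabs_mult, (Rabs_pos_eq (weight z)) by lra.
  apply Rle_trans with (K * sqrt (1 + z ^ 2) * weight z).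
  { apply Rmult_le_compat_r; [lra | apply Rabs_arg_J1_le]. }
  right. unfold weight. field. repeat split; apply Rgt_not_eq; lra.
Qed.

Lemma Rabs_arg_J1_mul_weight'_le z : 0 < z -> Rabs (arg_J1 z * weight' z) <= (2 / K) / z ^ 2.
Proof.
  intro Hz. pose proof (sqrt_1_plus_sq_ge_1 z). pose proof (sqrt_1_plus_sq_sqr z).
  set (s := sqrt (1 + z ^ 2)) in *.
  assert (Hw : Rabs (weight' z) = (2 * z ^ 2 + 1) / (K ^ 2 * z ^ 2 * s ^ 3)).
  { unfold weight'. fold s. rewrite Rabs_div, Rabs_Ropp, !Rabs_pos_eq; try reflexivity.
    - repeat apply Rmult_le_pos; nra.
    - nra.
    - apply Rgt_not_eq. repeat apply Rmult_lt_0_compat; nra. }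
  rewrite Rabs_mult, Hw.
  apply Rle_trans with (K * s * ((2 * z ^ 2 + 1) / (K ^ 2 * z ^ 2 * s ^ 3))).
  { apply Rmult_le_compat_r; [|apply Rabs_arg_J1_le].
    apply Rdiv_le_0_compat; [nra|]. repeat apply Rmult_lt_0_compat; nra. }
  replace (K * s * ((2 * z ^ 2 + 1) / (K ^ 2 * z ^ 2 * s ^ 3)))
    with ((2 / K) / z ^ 2 * ((2 * z ^ 2 + 1) / (2 * s ^ 2)))
    by (field; repeat split; apply Rgt_not_eq; nra).
  rewrite <- (Rmult_1_r (2 / K / z ^ 2)) at 2.
  apply Rmult_le_compat_l; [apply Rdiv_le_0_compat; [apply Rdiv_le_0_compat|]; nra|].
  apply Rle_div_l; nra.
Qed.

Lemma continuous_arg_J1_mul_weight' z : 0 < z -> continuous (fun z => arg_J1 z * weight' z) z.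
Proof.
  intro Hz. pose proof (sqrt_1_plus_sq_ge_1 z).
  apply (continuous_mult arg_J1 weight').
  - apply (ex_derive_continuous arg_J1). eexists. now apply is_derive_arg_J1.
  - apply (ex_derive_continuous weight'). unfold weight'. auto_derive.
    simpl in *. split; [nra|]. split; [|exact I].
    apply Rgt_not_eq. repeat apply Rmult_lt_0_compat; nra.
Qed.

Lemma RInt_kernel_by_parts b1 b2 : 0 < b1 -> b1 <= b2 ->
  RInt (kernel K gam) b1 b2
  = arg_J1 b2 * weight b2 - arg_J1 b1 * weight b1 - RInt (fun z => arg_J1 z * weight' z) b1 b2.
Proof.
  intros Hb1 Hb12.
  assert (Hparts : is_RInt (fun z => kernel K gam z + arg_J1 z * weight' z) b1 b2
                     (arg_J1 b2 * weight b2 - arg_J1 b1 * weight b1)).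
  { apply (is_RInt_derive (V := R_CompleteNormedModule) (fun z => arg_J1 z * weight z));
      intros z Hz; rewrite Rmin_left, Rmax_right in Hz by lra.
    - eapply is_derive_eq.
      { apply (is_derive_mult arg_J1 weight); [apply is_derive_arg_J1 | apply is_derive_weight | ];
          try lra. intros; apply Rmult_comm. }
      rewrite kernel_eq_mul_weight by lra. unfold plus, mult; simpl. ring.
    - apply (continuous_plus (V := R_NormedModule)); [apply continuous_kernel|].
      apply continuous_arg_J1_mul_weight'; lra. }
  apply (is_RInt_unique (V := R_CompleteNormedModule)) in Hparts.
  rewrite (RInt_plus (V := R_CompleteNormedModule)) in Hparts.
  - unfold plus in Hparts; simpl in Hparts. lra.
  - apply ex_RInt_kernel.
  - apply (ex_RInt_continuous (V := R_CompleteNormedModule)). intros z Hz.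
    rewrite Rmin_left, Rmax_right in Hz by lra. apply continuous_arg_J1_mul_weight'; lra.
Qed.

Lemma kernel_prim_tail b1 b2 : 1 <= b1 -> b1 <= b2 ->
  Rabs (kernel_prim K gam b2 - kernel_prim K gam b1) <= (4 / K) / b1.
Proof.
  intros Hb1 Hb12.
  rewrite <- (is_RInt_unique _ _ _ _ (is_RInt_kernel K gam b1 b2)).
  rewrite RInt_kernel_by_parts by lra.
  pose proof (Rabs_arg_J1_mul_weight_le b1 ltac:(lra)) as Hw1.
  pose proof (Rabs_arg_J1_mul_weight_le b2 ltac:(lra)) as Hw2.
  assert (Hrem : Rabs (RInt (fun z => arg_J1 z * weight' z) b1 b2) <= (2 / K) / b1).
  { apply Rabs_RInt_le_inv_sq; try lra.
    - apply (ex_RInt_continuous (V := R_CompleteNormedModule)). intros z Hz.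
      rewrite Rmin_left, Rmax_right in Hz by lra. apply continuous_arg_J1_mul_weight'; lra.
    - intros z Hz. apply Rabs_arg_J1_mul_weight'_le; lra. }
  assert (/ (K * b2) <= / (K * b1)) by (apply Rinv_le_contravar; nra).
  replace (4 / K / b1) with (/ (K * b1) + / (K * b1) + 2 / K / b1) by (field; lra).
  eapply Rle_trans; [apply Rabs_triang|]. rewrite Rabs_Ropp.
  eapply Rle_trans; [apply Rplus_le_compat_r, Rabs_triang|].
  rewrite Rabs_Ropp. lra.
Qed.

End KernelTail.

Section Substitution.

Variables beta t r phi : R.
Hypotheses (hbeta : 0 < beta) (ht : 0 < t) (hr : 0 < r).

Let green k :=
  / k * J0 (sqrt ((k * (r * cos phi) + beta * t / k) ^ 2 + k ^ 2 * (r * sin phi) ^ 2)).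
Let K := 2 * sqrt (beta * r * t).
Let gam := cos (phi / 2).
Let c := sqrt (r / (beta * t)).
Let z_of k := (c * k - / (c * k)) / 2.
Let z_of' k := (c + / (c * k ^ 2)) / 2.

Lemma c_pos : 0 < c.
Proof. apply sqrt_lt_R0, Rdiv_lt_0_compat; nra. Qed.

Lemma K_pos : 0 < K.
Proof.
  apply Rmult_lt_0_compat; [lra|]. apply sqrt_lt_R0; repeat apply Rmult_lt_0_compat; lra.
Qed.

Lemma gam_sq_le_1 : gam ^ 2 <= 1.
Proof. pose proof (COS_bound (phi / 2)). unfold gam. nra. Qed.

Lemma green_arg_eq k : 0 < k ->
  (k * (r * cos phi) + beta * t / k) ^ 2 + k ^ 2 * (r * sin phi) ^ 2
  = K ^ 2 * (z_of k ^ 2 + gam ^ 2).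
Proof.
  intro Hk. pose proof c_pos.
  assert (Hc2 : c ^ 2 = r / (beta * t)) by (apply pow2_sqrt, Rlt_le, Rdiv_lt_0_compat; nra).
  assert (HK2 : K ^ 2 = 4 * (beta * r * t)).
  { unfold K. rewrite Rpow_mult_distr, pow2_sqrt; [ring|].
    apply Rlt_le; repeat apply Rmult_lt_0_compat; lra. }
  assert (Hcos : cos phi = 2 * gam ^ 2 - 1).
  { unfold gam. replace phi with (2 * (phi / 2)) at 1 by field. rewrite cos_2a_cos. ring. }
  assert (Hsin : sin phi ^ 2 = 1 - cos phi ^ 2)
    by (pose proof (sin2_cos2 phi); unfold Rsqr in *; nra).
  replace ((k * (r * cos phi) + beta * t / k) ^ 2 + k ^ 2 * (r * sin phi) ^ 2)
    with (k ^ 2 * r ^ 2 + 2 * r * beta * t * cos phi + beta ^ 2 * t ^ 2 / k ^ 2)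
    by (rewrite Rpow_mult_distr, Hsin; field; lra).
  rewrite HK2, Hcos. unfold z_of.
  replace (r ^ 2) with (beta * t * r * c ^ 2) by (rewrite Hc2; field; nra).
  replace (beta ^ 2 * t ^ 2) with (beta * t * r / c ^ 2) by (rewrite Hc2; field; nra).
  field. repeat split; apply Rgt_not_eq; nra.
Qed.

Lemma green_eq k : 0 < k -> green k = kernel K gam (z_of k) * z_of' k.
Proof.
  intro Hk. pose proof c_pos. pose proof K_pos.
  assert (Hck : 0 < c * k) by nra. assert (0 < / (c * k)) by (apply Rinv_0_lt_compat; lra).
  assert (Hcosh : 1 + z_of k ^ 2 = ((c * k + / (c * k)) / 2) ^ 2)
    by (unfold z_of; field; lra).
  assert (Hsqrt : sqrt (K ^ 2 * (z_of k ^ 2 + gam ^ 2)) = K * sqrt (z_of k ^ 2 + gam ^ 2)).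
  { rewrite sqrt_mult, sqrt_pow2; try lra; try apply pow2_ge_0.
    pose proof (pow2_ge_0 (z_of k)). pose proof (pow2_ge_0 gam). lra. }
  unfold green, kernel. rewrite green_arg_eq, Hsqrt, Hcosh, sqrt_pow2 by lra.
  unfold z_of'. field. repeat split; apply Rgt_not_eq; nra.
Qed.

Lemma is_derive_z_of k : 0 < k -> is_derive z_of k (z_of' k).
Proof.
  intro Hk. pose proof c_pos. unfold z_of, z_of'. auto_derive.
  - apply Rgt_not_eq; nra.
  - field. lra.
Qed.

Lemma filterlim_z_of_at_right_0 : filterlim z_of (at_right 0) (Rbar_locally m_infty).
Proof.
  intros P [M HM]. pose proof c_pos.
  assert (Hdelta : 0 < / (c * (2 * Rabs M + 1)))
    by (apply Rinv_0_lt_compat; pose proof (Rabs_pos M); nra).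
  exists (mkposreal _ Hdelta). intros k Hball Hk. apply HM.
  apply (proj1 (ball_R _ _ _)) in Hball.
  rewrite Rminus_0_r, Rabs_pos_eq in Hball by lra. simpl in Hball.
  assert (Hck : c * k * (2 * Rabs M + 1) < 1).
  { pose proof (Rabs_pos M).
    replace (c * k * (2 * Rabs M + 1)) with (k * (c * (2 * Rabs M + 1))) by ring.
    apply Rlt_le_trans with (/ (c * (2 * Rabs M + 1)) * (c * (2 * Rabs M + 1))).
    - apply Rmult_lt_compat_r; [nra | exact Hball].
    - right. apply Rinv_l. nra. }
  assert (Hinv : 2 * Rabs M + 1 < / (c * k)).
  { apply (Rmult_lt_reg_l (c * k)); [nra|]. rewrite Rinv_r by nra. lra. }
  assert (c * k < 1) by (pose proof (Rabs_pos M); nra).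
  pose proof (Rle_abs (- M)). rewrite Rabs_Ropp in *. unfold z_of. lra.
Qed.

Lemma filterlim_z_of_p_infty : filterlim z_of (Rbar_locally p_infty) (Rbar_locally p_infty).
Proof.
  intros P [M HM]. pose proof c_pos. exists ((2 * Rabs M + 1) / c). intros k Hk. apply HM.
  assert (Hck : 2 * Rabs M + 1 < c * k) by (apply Rlt_div_l in Hk; lra).
  pose proof (Rabs_pos M). pose proof (Rle_abs M).
  assert (/ (c * k) < 1) by (rewrite <- Rinv_1; apply Rinv_lt_contravar; nra).
  unfold z_of. lra.
Qed.

Lemma improper_int_green L :
  filterlim (kernel_prim K gam) (Rbar_locally p_infty) (locally L) ->
  improper_int_0_inf green (2 * L).
Proof.
  intro HL. replace (2 * L) with (L - - L) by ring.
  apply improper_int_of_primitive with (fun k => kernel_prim K gam (z_of k)).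
  - intros a b Ha Hab.
    apply (is_RInt_ext (V := R_NormedModule) (fun k => kernel K gam (z_of k) * z_of' k));
      [intros k Hk; rewrite Rmin_left in Hk by lra; symmetry; apply green_eq; lra|].
    apply (is_RInt_derive (V := R_CompleteNormedModule) (fun k => kernel_prim K gam (z_of k)));
      intros k Hk; rewrite Rmin_left in Hk by lra.
    + eapply is_derive_eq.
      { apply (is_derive_comp (kernel_prim K gam) z_of);
          [apply is_derive_kernel_prim | apply is_derive_z_of; lra]. }
      unfold scal; simpl; unfold mult; simpl. ring.
    + apply (continuous_mult (fun k => kernel K gam (z_of k)) z_of').
      * apply (continuous_comp z_of (kernel K gam)); [|apply continuous_kernel].
        apply (ex_derive_continuous z_of). eexists; apply is_derive_z_of; lra.
      * apply (ex_derive_continuous z_of'). pose proof c_pos. unfold z_of'. auto_derive.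
        apply Rgt_not_eq. repeat apply Rmult_lt_0_compat; lra.
  - eapply filterlim_comp; [apply filterlim_z_of_at_right_0|].
    now apply filterlim_kernel_prim_m_infty.
  - eapply filterlim_comp; [apply filterlim_z_of_p_infty | exact HL].
Qed.

End Substitution.

Theorem mainTheorem5 (beta N t r phi : R)
  (hbeta : 0 < beta) (ht : 0 < t) (hr : 0 < r) :
  let x := r * cos phi in
  let y := r * sin phi in
  let alpha := beta * r * t in
  let gamma := cos (phi / 2) in
  exists LG LR : R,
    improper_int_0_inf
      (fun k => / k * J0 (sqrt ((k * x + beta * t / k) ^ 2 + k ^ 2 * y ^ 2))) LG /\
    improper_int_0_inf
      (fun z => / sqrt (1 + z ^ 2) * J0 (2 * sqrt alpha * sqrt (z ^ 2 + gamma ^ 2))) LR /\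
    - N / (2 * PI) * LG = - N / PI * LR.
Proof.
  intros x y alpha gamma.
  pose proof (kernel_prim_tail _ _ (K_pos beta t r hbeta ht hr) (gam_sq_le_1 phi)) as Htail.
  destruct (ex_lim_p_infty_of_tail_bound _ _ Htail) as [L HL].
  exists (2 * L), L. split; [|split].
  - exact (improper_int_green beta t r phi hbeta ht hr L HL).
  - exact (improper_int_kernel _ _ L HL).
  - field. apply PI_neq0.
Qed.
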